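(* The constancy atoms $=\!(\vec v)$ and the inconstancy atoms $\neq\!(\vec v)$ are not definable in $\mathbf{FO}(\mathrm{NE},\sqcup)$.
   Context: Team semantics (lax version). For a structure $\mathfrak M$ with domain $M$, a team $X$ is a (possibly empty) set of assignments $s:V\to M$, $V$ a finite set of variables. Satisfaction for formulas in negation normal form: first-order literal $\alpha$: every $s\in X$ satisfies $\alpha$ (Tarski); $\psi\vee\theta$: $X=Y\cup Z$ with $\mathfrak M\models_Y\psi$, $\mathfrak M\models_Z\theta$; $\psi\wedge\theta$: both; $\exists v\psi$: some $F:X\to\mathcal P(M)\setminus\{\emptyset\}$ with $\mathfrak M\models_{X[F/v]}\psi$, $X[F/v]=\{s[m/v]:s\in X,m\in F(s)\}$; $\forall v\psi$: $\mathfrak M\models_{X[M/v]}\psi$, $X[M/v]=\{s[m/v]:s\in X,m\in M\}$. $\mathfrak M\models_X\mathrm{NE}$ iff $X\ne\emptyset$; $\mathfrak M\models_X\phi\sqcup\psi$ iff $\mathfrak M\models_X\phi$ or $\mathfrak M\models_X\psi$. Constancy: $\mathfrak M\models_X=\!(\vec v)$ iff $s(\vec v)=s'(\vec v)$ for all $s,s'\in X$; inconstancy: $\mathfrak M\models_X\neq\!(\vec v)$ iff there are $s,s'\in X$ with $s(\vec v)\ne s'(\vec v)$. An atom $A\vec v$ is definable in a logic $L$ if there is a formula $\theta(\vec v)\in L$ over the empty vocabulary ($\vec v$ distinct variables) with $\mathfrak M\models_XA\vec v\iff\mathfrak M\models_X\theta(\vec v)$ for all structures $\mathfrak M$ and teams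 $X$ whose domain contains $\vec v$. *)

From mathcomp Require Import all_boot.
Set Implicit Arguments. Unset Strict Implicit. Unset Printing Implicit Defensive.

(* An assignment with finite domain V into a
   structure with domain M is a partial map [nat -> option M] whose defined
   points are exactly V. *)
Definition assignment (M : Type) := nat -> option M.
Definition team (M : Type) := assignment M -> Prop.

Definition upd (M : Type) (s : assignment M) (v : nat) (m : M) : assignment M :=
  fun y => if y == v then Some m else s y.

(* Formulas of FO(NE, ⊔) over the empty vocabulary, in negation normal form. *)
Inductive form : Type :=
| FEq  : nat -> nat -> form
| FNeq : nat -> nat -> form
| FNE  : form
| FAnd : form -> form -> form
| FOr  : form -> form -> form        (* tensor disjunction *)
| FGor : form -> form -> form        (* global / Boolean disjunction ⊔ *)
| FEx  : nat -> form -> form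
| FAll : nat -> form -> form.

Fixpoint fv (phi : form) : seq nat :=
  match phi with
  | FEq x y | FNeq x y => [:: x; y]
  | FNE => [::]
  | FAnd p q | FOr p q | FGor p q => fv p ++ fv q
  | FEx v p | FAll v p => [seq x <- fv p | x != v]
  end.

(* Lax team semantics. *)
Fixpoint sat (M : Type) (X : team M) (phi : form) : Prop :=
  match phi with
  | FEq x y => forall s, X s -> exists a b, s x = Some a /\ s y = Some b /\ a = b
  | FNeq x y => forall s, X s -> exists a b, s x = Some a /\ s y = Some b /\ a <> b
  | FNE => exists s, X s
  | FAnd p q => sat X p /\ sat X q
  | FOr p q => exists Y Z : team M,
      (forall s, X s <-> Y s \/ Z s) /\ sat Y p /\ sat Z q
  | FGor p q => sat X p \/ sat X q
  | FEx v p => exists F : assignment M -> M -> Prop,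
      (forall s, X s -> exists m, F s m) /\
      sat (fun s' => exists s m, X s /\ F s m /\ s' = upd s v m) p
  | FAll v p => sat (fun s' => exists s m, X s /\ s' = upd s v m) p
  end.

Definition team_dom (M : Type) (X : team M) (V : seq nat) : Prop :=
  forall s, X s -> forall x, (exists a, s x = Some a) <-> x \in V.

Definition const_atom (M : Type) (X : team M) (vs : seq nat) : Prop :=
  forall s s', X s -> X s' -> map s vs = map s' vs.

Definition inconst_atom (M : Type) (X : team M) (vs : seq nat) : Prop :=
  exists s s', X s /\ X s' /\ map s vs <> map s' vs.

Definition definable (A : forall M : Type, team M -> seq nat -> Prop)
    (vs : seq nat) : Prop :=
  exists theta : form, {subset fv theta <= vs} /\
    forall (M : Type), inhabited M ->
    forall (X : team M) (V : seq nat), team_dom X V -> {subset vs <= V} ->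
      (sat X theta <-> A M X vs).

(* Formulas of FO(NE, ⊔) over the empty vocabulary are invariant under the
   following equivalence of teams relative to a set W containing all the
   variables of the formula: every assignment of either team has a partner
   in the other with the same equality type on W, i.e. defining the same
   variables of W and identifying the same pairs of them.  The induction
   passes the quantifiers because a value chosen for a variable on one side
   is matched on the other by the value of a variable it equals, or else by
   a fresh value.  The teams sending all of vs to a single number, taken
   from {0} resp. from {0, 1}, are equivalent in this sense, yet only the
   first satisfies =(vs) and only the second satisfies ≠(vs). *)
From mathcomp Require Import all_boot.

Set Implicit Arguments.
Unset Strict Implicit.
Unset Printing Implicit Defensive.

Fixpoint vars (phi : form) : seq nat :=
  match phi with
  | FEq x y | FNeq x y => [:: x; y]
  | FNE => [::]
  | FAnd p q | FOr p q | FGor p q => vars p ++ vars q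
  | FEx v p | FAll v p => v :: vars p
  end.

Definition same_eqtype (W : seq nat) (s s' : assignment nat) : Prop :=
  (forall x y, x \in W -> y \in W -> (s x = s y <-> s' x = s' y)) /\
  (forall x, x \in W -> (s x = None <-> s' x = None)).

Definition teams_equiv (W : seq nat) (X X' : team nat) : Prop :=
  (forall s, X s -> exists2 s', X' s' & same_eqtype W s s') /\
  (forall s', X' s' -> exists2 s, X s & same_eqtype W s s').

Definition supplement (X : team nat) (v : nat)
    (F : assignment nat -> nat -> Prop) : team nat :=
  fun s' => exists s m, X s /\ F s m /\ s' = upd s v m.

Definition duplicate (X : team nat) (v : nat) : team nat :=
  fun s' => exists s m, X s /\ s' = upd s v m.

Section SameEqtype.

Variable W : seq nat.

Lemma same_eqtype_sym s s' : same_eqtype W s s' -> same_eqtype W s' s.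
Proof.
case=> eqW defW; split=> [x y xW yW | x xW]; apply: iff_sym;
  [exact: eqW | exact: defW].
Qed.

Lemma same_eqtype_upd_match s s' v m m' :
  same_eqtype W s s' ->
  (forall z, z \in W -> z != v -> (s z = Some m <-> s' z = Some m')) ->
  same_eqtype W (upd s v m) (upd s' v m').
Proof.
move=> [eqW defW] match_m; split=> [x y xW yW | x xW]; rewrite /upd.
- have match_sym z : z \in W -> z != v -> (Some m = s z <-> Some m' = s' z).
    by move=> zW zv; split=> /esym/(match_m z zW zv) ->.
  case: (eqVneq x v) => [_ | xv]; case: (eqVneq y v) => [_ | yv] //.
  + exact: match_sym.
  + exact: match_m.
  + exact: eqW.
- by case: eqP => _; [| exact: defW].
Qed.

Lemma same_eqtype_upd s s' v m : same_eqtype W s s' ->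
  exists m', same_eqtype W (upd s v m) (upd s' v m').
Proof.
move=> eq_s; have [eqW defW] := eq_s.
have [[z zW /andP [zv /eqP sz]] | fresh_m] :=
  altP (@hasP _ (fun z => (z != v) && (s z == Some m)) W).
- case s'z: (s' z) => [m' |]; last by move: s'z => /(defW z zW); rewrite sz.
  exists m'; apply: same_eqtype_upd_match => // y yW yv.
  by rewrite -sz -s'z; exact: eqW.
- pose big := \max_(y <- W) odflt 0 (s' y).
  exists big.+1; apply: same_eqtype_upd_match => // y yW yv; split=> [sy | s'y].
  + by case/negP: fresh_m; apply/hasP; exists y; rewrite // yv sy eqxx.
  + have := @leq_bigmax_seq _ _ xpredT (fun y => odflt 0 (s' y)) _ yW erefl.
    by rewrite -/big s'y ltnn.
Qed.

Lemma teams_equiv_union X X' Y Z : teams_equiv W X X' ->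
  (forall s, X s <-> Y s \/ Z s) ->
  exists Y' Z', (forall s', X' s' <-> Y' s' \/ Z' s') /\
    teams_equiv W Y Y' /\ teams_equiv W Z Z'.
Proof.
move=> [fwd bwd] XYZ.
pose restrict (U : team nat) s' := X' s' /\ exists2 s, U s & same_eqtype W s s'.
exists (restrict Y), (restrict Z); split; [|split; split].
- move=> s'; split=> [/[dup] X's' /bwd [s /XYZ [Ys | Zs] eq_s] | [[] | []] //].
  + by left; split=> //; exists s.
  + by right; split=> //; exists s.
- move=> s Ys; have [s' X's' eq_s] := fwd s (proj2 (XYZ s) (or_introl Ys)).
  by exists s' => //; split=> //; exists s.
- by move=> s' [_ [s Ys eq_s]]; exists s.
- move=> s Zs; have [s' X's' eq_s] := fwd s (proj2 (XYZ s) (or_intror Zs)).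
  by exists s' => //; split=> //; exists s.
- by move=> s' [_ [s Zs eq_s]]; exists s.
Qed.

Lemma teams_equiv_supplement X X' v F : teams_equiv W X X' ->
  (forall s, X s -> exists m, F s m) ->
  exists F', (forall s', X' s' -> exists m', F' s' m') /\
    teams_equiv W (supplement X v F) (supplement X' v F').
Proof.
move=> [fwd bwd] F_total.
pose F' s' m' := exists s m, [/\ X s, F s m, same_eqtype W s s' &
  same_eqtype W (upd s v m) (upd s' v m')].
exists F'; split; [|split].
- move=> s' /bwd [s Xs eq_s]; have [m Fsm] := F_total s Xs.
  have [m' eq_upd] := same_eqtype_upd v m eq_s.
  by exists m', s, m.
- move=> _ [s [m [Xs [Fsm ->]]]]; have [s' X's' eq_s] := fwd s Xs.
  have [m' eq_upd] := same_eqtype_upd v m eq_s.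
  exists (upd s' v m') => //; exists s', m'.
  by split=> //; split=> //; exists s, m.
- move=> _ [s' [m' [X's' [[s [m [Xs Fsm _ eq_upd]]] ->]]]].
  by exists (upd s v m) => //; exists s, m.
Qed.

Lemma teams_equiv_duplicate X X' v : teams_equiv W X X' ->
  teams_equiv W (duplicate X v) (duplicate X' v).
Proof.
move=> [fwd bwd]; split.
- move=> _ [s [m [Xs ->]]]; have [s' X's' eq_s] := fwd s Xs.
  have [m' eq_upd] := same_eqtype_upd v m eq_s.
  by exists (upd s' v m') => //; exists s', m'.
- move=> _ [s' [m' [X's' ->]]]; have [s Xs eq_s] := bwd s' X's'.
  have [m eq_upd] := same_eqtype_upd v m' (same_eqtype_sym eq_s).
  by exists (upd s v m); [exists s, m | exact: same_eqtype_sym].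
Qed.

Lemma same_eqtype_eq_atom s s' x y :
  same_eqtype W s s' -> x \in W -> y \in W ->
  (exists a b, s x = Some a /\ s y = Some b /\ a = b) ->
  exists a b, s' x = Some a /\ s' y = Some b /\ a = b.
Proof.
move=> [eqW defW] xW yW [a [b [sx [sy ab]]]].
have /(eqW x y xW yW) s'xy : s x = s y by rewrite sx sy ab.
case s'x: (s' x) => [a' |]; last by move: s'x => /(defW x xW); rewrite sx.
by exists a', a'; rewrite -s'xy s'x.
Qed.

Lemma same_eqtype_neq_atom s s' x y :
  same_eqtype W s s' -> x \in W -> y \in W ->
  (exists a b, s x = Some a /\ s y = Some b /\ a <> b) ->
  exists a b, s' x = Some a /\ s' y = Some b /\ a <> b.
Proof.
move=> [eqW defW] xW yW [a [b [sx [sy ab]]]].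
case s'x: (s' x) => [a' |]; last by move: s'x => /(defW x xW); rewrite sx.
case s'y: (s' y) => [b' |]; last by move: s'y => /(defW y yW); rewrite sy.
exists a', b'; do 2!split=> //; move=> a'b'; apply: ab.
suff : s x = s y by rewrite sx sy => -[].
by apply/(eqW x y xW yW); rewrite s'x s'y a'b'.
Qed.

Lemma sat_teams_equiv phi X X' : all (mem W) (vars phi) ->
  teams_equiv W X X' -> sat X phi -> sat X' phi.
Proof.
elim: phi X X' => [x y|x y||p IHp q IHq|p IHp q IHq|p IHp q IHq|v p IHp|v p IHp]
  X X' /=; rewrite ?all_cat.
- move=> /and3P [xW yW _] [_ bwd] sat_X s' /bwd [s /sat_X atom_s eq_s].
  exact: same_eqtype_eq_atom eq_s xW yW atom_s.
- move=> /and3P [xW yW _] [_ bwd] sat_X s' /bwd [s /sat_X atom_s eq_s].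
  exact: same_eqtype_neq_atom eq_s xW yW atom_s.
- by move=> _ [fwd _] [s /fwd [s' X's' _]]; exists s'.
- move=> /andP [subp subq] XX' [sat_p sat_q].
  by split; [exact: IHp XX' sat_p | exact: IHq XX' sat_q].
- move=> /andP [subp subq] XX' [Y [Z [XYZ [sat_Y sat_Z]]]].
  have [Y' [Z' [X'YZ [YY' ZZ']]]] := teams_equiv_union XX' XYZ.
  exists Y', Z'; split=> //.
  by split; [exact: IHp YY' sat_Y | exact: IHq ZZ' sat_Z].
- move=> /andP [subp subq] XX' [sat_p | sat_q].
  + by left; exact: IHp XX' sat_p.
  + by right; exact: IHq XX' sat_q.
- move=> /andP [_ subp] XX' [F [F_total sat_p]].
  have [F' [F'_total XF]] := teams_equiv_supplement v XX' F_total.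
  by exists F'; split=> //; exact: IHp XF sat_p.
- move=> /andP [_ subp] XX'; exact: IHp (teams_equiv_duplicate v XX').
Qed.

End SameEqtype.

Definition constant_on (vs : seq nat) (k : nat) : assignment nat :=
  fun y => if y \in vs then Some k else None.

Definition constant_team (vs : seq nat) (K : seq nat) : team nat :=
  fun s => exists2 k, k \in K & s = constant_on vs k.

Lemma same_eqtype_constant_on W vs a b :
  same_eqtype W (constant_on vs a) (constant_on vs b).
Proof.
split=> [x y _ _ | x _]; rewrite /constant_on;
  last by case: (x \in vs).
by case: (x \in vs); case: (y \in vs) => //; split=> // -[].
Qed.

Lemma teams_equiv_constant_team W vs K K' : K != [::] -> K' != [::] ->
  teams_equiv W (constant_team vs K) (constant_team vs K').
Proof.
case: K => // a K _; case: K' => // a' K' _.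
split=> _ [k _ ->]; [exists (constant_on vs a') | exists (constant_on vs a)];
  by [exists a'; rewrite ?inE ?eqxx | exists a; rewrite ?inE ?eqxx
     | exact: same_eqtype_constant_on].
Qed.

Lemma team_dom_constant_team vs K : team_dom (constant_team vs K) vs.
Proof.
move=> _ [k _ ->] x; rewrite /constant_on.
by case: (x \in vs); split=> //; [exists k | case].
Qed.

Lemma map_constant_on_inj vs a b : vs != [::] ->
  map (constant_on vs a) vs = map (constant_on vs b) vs -> a = b.
Proof.
by case: vs => // v vs _ [] /=; rewrite /constant_on inE eqxx => -[].
Qed.

Lemma definable_transfer_constant_team A vs : definable A vs ->
  forall K K', K != [::] -> K' != [::] ->
  A nat (constant_team vs K) vs -> A nat (constant_team vs K') vs.
Proof.
move=> [theta [_ def_theta]] K K' K0 K'0.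
have sat_A L : sat (constant_team vs L) theta <-> A nat (constant_team vs L) vs.
  apply: def_theta; [exact: inhabits 0 | exact: team_dom_constant_team | by []].
move=> /sat_A sat_K; apply/sat_A.
exact: sat_teams_equiv (allss _) (teams_equiv_constant_team _ _ K0 K'0) sat_K.
Qed.

Lemma const_atom_inconst_atomF (M : Type) (X : team M) vs :
  const_atom X vs -> inconst_atom X vs -> False.
Proof. by move=> const_X [s [s' [Xs [Xs' /(_ (const_X s s' Xs Xs'))]]]]. Qed.

Lemma const_atom_constant_team1 vs k : const_atom (constant_team vs [:: k]) vs.
Proof. by move=> _ _ [a /[1!inE] /eqP -> ->] [b /[1!inE] /eqP -> ->]. Qed.

Lemma inconst_atom_constant_team2 vs a b : vs != [::] -> a != b ->
  inconst_atom (constant_team vs [:: a; b]) vs.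
Proof.
move=> vs0 /eqP ab; exists (constant_on vs a), (constant_on vs b).
split; first by exists a; rewrite ?inE ?eqxx.
split; first by exists b; rewrite ?inE ?eqxx ?orbT.
by move/(map_constant_on_inj vs0).
Qed.

Theorem mainTheorem17 :
  forall vs : seq nat, vs != [::] -> uniq vs ->
    ~ definable const_atom vs /\ ~ definable inconst_atom vs.
Proof.
move=> vs vs0 _.
have const_0 : const_atom (constant_team vs [:: 0]) vs.
  exact: const_atom_constant_team1.
have inconst_01 := inconst_atom_constant_team2 vs0 (isT : 0 != 1).
split=> /definable_transfer_constant_team transfer.
- apply: (const_atom_inconst_atomF _ inconst_01).
  exact: transfer [:: 0] [:: 0; 1] isT isT const_0.
- apply: (const_atom_inconst_atomF const_0).
  exact: transfer [:: 0; 1] [:: 0] isT isT inconst_01.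
Qed.
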